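(* Fix $(\boldsymbol l,\boldsymbol m)\in\mathcal Z_{kn}$. For generic $\bar\alpha=(\alpha_1,\dots,\alpha_n)$ and $\bar z=(z_1,\dots,z_k)$, the common eigenspaces of the operators $$\mathcal H_a=\sum_{i=1}^n\alpha_i\,\xi_{ai}\partial_{ai}+\sum_{b\ne a}\frac{1}{z_a-z_b}\sum_{i,j=1}^n\xi_{ai}\partial_{aj}\,\xi_{bj}\partial_{bi},\qquad a=1,\dots,k,$$ restricted to $\mathfrak P_{kn}[\boldsymbol l,\boldsymbol m]$ are one-dimensional. Similarly, for generic $\bar\alpha,\bar z$, the common eigenspaces of the operators $$\mathcal H'_i=\sum_{a=1}^k z_a\,\xi_{ai}\partial_{ai}+\sum_{j\ne i}\frac{1}{\alpha_j-\alpha_i}\sum_{a,b=1}^k\xi_{ai}\partial_{bi}\,\xi_{bj}\partial_{aj},\qquad i=1,\dots,n,$$ restricted to $\mathfrak P_{kn}[\boldsymbol l,\boldsymbol m]$ are one-dimensional.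
   Context: $\mathfrak P_{kn}$ is the space of polynomials in pairwise anticommuting variables $\xi_{ai}$ ($a\le k$, $i\le n$); the left derivation $\partial_{ai}$ sends a monomial $\xi_{c_1}\cdots\xi_{c_l}$ to $(-1)^{s-1}$ times the monomial with the $s$-th factor removed if $c_s=(a,i)$, and to $0$ otherwise. $\mathcal Z_{kn}$ is the set of $(\boldsymbol l,\boldsymbol m)\in\mathbb Z_{\ge0}^k\times\mathbb Z_{\ge0}^n$ with $l_a\le n$, $m_i\le k$, $\sum l_a=\sum m_i$; $\mathfrak P_{kn}[\boldsymbol l,\boldsymbol m]$ is spanned by the monomials $\prod\xi_{ai}^{d_{ai}}$, $d_{ai}\in\{0,1\}$, with $\sum_ad_{ai}=m_i$, $\sum_id_{ai}=l_a$. The operators $\mathcal H_a$ and $\mathcal H'_i$ are the images of the Gaudin Hamiltonians $H^{\langle n,k\rangle}_a(\bar\alpha,\bar z)=\sum_i\alpha_i(e_{ii})_{(a)}+\sum_{b\ne a}\Omega_{(ab)}/(z_a-z_b)\in U(\mathfrak{gl}_n)^{\otimes k}$ and $H^{\langle k,n\rangle}_i(\bar z,-\bar\alpha)\in U(\mathfrak{gl}_k)^{\otimes n}$ under $(e^{\langle n\rangle}_{ij})_{(a)}\mapsto\xi_{ai}\partial_{aj}$ and $(e^{\langle k\rangle}_{ab})_{(i)}\mapsto\xi_{ai}\partial_{bi}$ respectively; the $\alpha_i$ are pairwise distinct and the $z_a$ pairwise distinct. *)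

From HB Require Import structures.
From mathcomp Require Import all_boot all_order all_algebra.
From mathcomp Require Export mpoly.
Set Implicit Arguments. Unset Strict Implicit. Unset Printing Implicit Defensive.
Import Order.TTheory GRing.Theory Num.Theory.
Local Open Scope ring_scope.

Section Fermionic.
Variables (C : numClosedFieldType) (k n : nat).

(* The Grassmann variable xi_{ai} is indexed by c = mxvec_index a i : 'I_(k*n);
   monomials xi_{c_1}...xi_{c_l} with c_1 < ... < c_l are indexed by the set
   {c_1,...,c_l}.  An element of P_kn is its coefficient function. *)
Definition vidx (a : 'I_k) (i : 'I_n) : 'I_(k * n) := mxvec_index a i.

Definition Pkn := {ffun {set 'I_(k * n)} -> C}.

Definition mono (S : {set 'I_(k * n)}) : Pkn := [ffun T => (T == S)%:R].

Definition scalP (c : C) (f : Pkn) : Pkn := [ffun T => c * f T].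
Definition addP (f g : Pkn) : Pkn := [ffun T => f T + g T].
Definition zeroP : Pkn := [ffun _ => 0].

(* left derivation d_d on a basis monomial: sign (-1)^(s-1), s = position of d *)
(* then left multiplication by xi_c *)
Definition xd_mono (c d : 'I_(k * n)) (S : {set 'I_(k * n)}) : Pkn :=
  if d \in S then
    let S' := S :\ d in
    if c \in S' then zeroP
    else scalP ((-1) ^+ (#|[set e in S | (e < d)%N]| + #|[set e in S' | (e < c)%N]|))
               (mono (c |: S'))
  else zeroP.

Definition XD (c d : 'I_(k * n)) (f : Pkn) : Pkn :=
  [ffun T => \sum_(S : {set 'I_(k * n)}) f S * xd_mono c d S T].

Definition Hop (al : 'I_n -> C) (z : 'I_k -> C) (a : 'I_k) (f : Pkn) : Pkn :=
  [ffun T =>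
     (\sum_(i < n) al i * XD (vidx a i) (vidx a i) f T)
   + \sum_(b < k | b != a) (z a - z b)^-1 *
       \sum_(i < n) \sum_(j < n)
          XD (vidx a i) (vidx a j) (XD (vidx b j) (vidx b i) f) T].

Definition Hop' (al : 'I_n -> C) (z : 'I_k -> C) (i : 'I_n) (f : Pkn) : Pkn :=
  [ffun T =>
     (\sum_(a < k) z a * XD (vidx a i) (vidx a i) f T)
   + \sum_(j < n | j != i) (al j - al i)^-1 *
       \sum_(a < k) \sum_(b < k)
          XD (vidx a i) (vidx b i) (XD (vidx b j) (vidx a j) f) T].

Definition inZ (l : 'I_k -> nat) (m : 'I_n -> nat) : Prop :=
  (forall a, l a <= n)%N /\ (forall i, m i <= k)%N /\
  (\sum_(a < k) l a = \sum_(i < n) m i)%N.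

Definition wt_ok (l : 'I_k -> nat) (m : 'I_n -> nat) (S : {set 'I_(k * n)}) :=
  (forall a, #|[set i | vidx a i \in S]| = l a) /\
  (forall i, #|[set a | vidx a i \in S]| = m i).

Definition inPlm l m (f : Pkn) : Prop := forall S, f S != 0 -> wt_ok l m S.

Definition common_eig {I : Type} (ops : I -> Pkn -> Pkn) (lam : I -> C) l m
    (f : Pkn) : Prop :=
  inPlm l m f /\ forall x, ops x f = scalP (lam x) f.

Definition dim_le1 (P : Pkn -> Prop) : Prop :=
  exists u : Pkn, forall f, P f -> exists c : C, f = scalP c u.

Definition pt (al : 'I_n -> C) (z : 'I_k -> C) : 'I_(n + k) -> C :=
  fun t => match split t with inl i => al i | inr a => z a end.

End Fermionic.

From HB Require Import structures.
From mathcomp Require Import all_boot all_order all_algebra.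
From mathcomp Require Import mpoly zify.
Set Implicit Arguments. Unset Strict Implicit. Unset Printing Implicit Defensive.
Import Order.TTheory GRing.Theory Num.Theory.
Local Open Scope ring_scope.

(* The common eigenspaces are at most one-dimensional on all of P_kn.  A common eigenvector of the H_a is an
   eigenvector of X = sum_a 2^(n a) H_a, whose matrix is a pencil
   sum_i al_i A_i + sum_(a <> b) (z_a - z_b)^-1 B_ab.  The eigenspaces of a
   matrix M are at most one-dimensional as soon as its Krylov matrix
   (M^j 1)_j is invertible, and once the poles are cleared by
   prod_(a <> b) (z_a - z_b) the determinant of that Krylov matrix is a
   polynomial P in (al, z).  P is nonzero: at al_i = 2^i, z = w / s the pencil
   is A_0 + s B_0, where A_0 is diagonal with the pairwise distinct entries
   sum_((a, i) in S) 2^(n a + i) on the monomials S; so the Krylov determinant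
   of A_0 + s B_0 is a polynomial in s that is nonzero at 0, hence at some
   s <> 0.  The H'_i are treated alike, with al and z exchanged. *)

Section Krylov.
Variables (R : comNzRingType) (N : nat).
Implicit Types (M : 'M[R]_N) (v : 'cV[R]_N) (f : 'rV[R]_N).

Definition krylov_mx M v : 'M[R]_N := \matrix_(i, j) (M ^+ j *m v) i 0.

Lemma exprZn_mx c M j : (c *: M) ^+ j = c ^+ j *: M ^+ j.
Proof.
elim: j => [|j IHj]; first by rewrite !expr0 scale1r.
by rewrite !exprS IHj -!mulmxE -scalemxAl -scalemxAr scalerA.
Qed.

Lemma eigenrowX M f mu j : f *m M = mu *: f -> f *m M ^+ j = mu ^+ j *: f.
Proof.
move=> fM; elim: j => [|j IHj]; first by rewrite !expr0 mulmx1 scale1r.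
by rewrite exprSr -mulmxE mulmxA IHj -scalemxAl fM scalerA -exprSr.
Qed.

Lemma eigenrow_krylov M v f mu : f *m M = mu *: f ->
  f *m krylov_mx M v = (f *m v) 0 0 *: \row_j mu ^+ j.
Proof.
move=> fM; apply/rowP => j; transitivity ((f *m (M ^+ j *m v)) 0 0).
  by rewrite !mxE; apply: eq_bigr => i _; rewrite mxE.
by rewrite mulmxA (eigenrowX _ fM) -scalemxAl !mxE mulrC.
Qed.

Lemma krylov_mxZ c M v :
  krylov_mx (c *: M) v = krylov_mx M v *m diag_mx (\row_j c ^+ j).
Proof.
apply/matrixP => i j; rewrite mul_mx_diag !mxE exprZn_mx mulr_suml.
by apply: eq_bigr => l _; rewrite mxE -mulrA mulrC.
Qed.

Lemma det_krylov_mxZ c M v :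
  \det (krylov_mx (c *: M) v) = \det (krylov_mx M v) * \prod_(j < N) c ^+ j.
Proof.
rewrite krylov_mxZ det_mulmx det_diag.
by congr (_ * _); apply: eq_bigr => j _; rewrite mxE.
Qed.

Lemma krylov_diag_mx (d : 'rV[R]_N) :
  krylov_mx (diag_mx d) (const_mx 1) = (Vandermonde N d)^T.
Proof.
have diag_mxX e : diag_mx d ^+ e = diag_mx (\row_l d 0 l ^+ e).
  elim: e => [|e IHe]; first by apply/matrixP => l l'; rewrite !mxE expr0.
  rewrite exprS IHe -mulmxE mulmx_diag; congr diag_mx.
  by apply/rowP => l; rewrite !mxE exprS.
apply/matrixP => i j.
by rewrite [LHS]mxE diag_mxX mul_diag_mx !mxE mulr1.
Qed.

End Krylov.

Lemma map_krylov_mx (R S : comNzRingType) N (g : {rmorphism R -> S})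
    (M : 'M[R]_N) v :
  map_mx g (krylov_mx M v) = krylov_mx (map_mx g M) (map_mx g v).
Proof.
apply/matrixP => i j; rewrite !mxE rmorph_sum -rmorphXn.
by apply: eq_bigr => l _; rewrite rmorphM !mxE.
Qed.

Section KrylovField.
Variables (F : fieldType) (N : nat).

Lemma krylov_eigenspace_le1 (M : 'M[F]_N) v mu : krylov_mx M v \in unitmx ->
  exists u : 'rV_N, forall f, f *m M = mu *: f -> exists c, f = c *: u.
Proof.
move=> Kunit; exists ((\row_j mu ^+ j) *m invmx (krylov_mx M v)) => f fM.
by exists ((f *m v) 0 0); rewrite scalemxAl -(eigenrow_krylov v fM) mulmxK.
Qed.

Lemma det_krylov_diag_neq0 (d : 'rV[F]_N) :
  injective (d 0) -> \det (krylov_mx (diag_mx d) (const_mx 1)) != 0.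
Proof.
move=> d_inj; rewrite krylov_diag_mx det_tr det_Vandermonde.
apply/prodf_neq0 => i _; apply/prodf_neq0 => j ltij; rewrite subr_eq0.
by apply: contraTneq ltij => /d_inj ->; rewrite ltnn.
Qed.

End KrylovField.

Section GenericPencil.
Variables (C : closedFieldType) (N q p nv : nat).
Variables (A : 'I_q -> 'M[C]_N) (B : 'I_p * 'I_p -> 'M[C]_N).
Variables (vx : 'I_q -> 'I_nv) (vy : 'I_p -> 'I_nv).
Variable pt : ('I_q -> C) -> ('I_p -> C) -> 'I_nv -> C.
Hypothesis pt_vx : forall x y i, pt x y (vx i) = x i.
Hypothesis pt_vy : forall x y a, pt x y (vy a) = y a.

Definition pencil (x : 'I_q -> C) (y : 'I_p -> C) : 'M[C]_N :=
  \sum_i x i *: A i + \sum_(ab | ab.1 != ab.2) (y ab.1 - y ab.2)^-1 *: B ab.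

Definition discr (y : 'I_p -> C) : C :=
  \prod_(ab : 'I_p * 'I_p | ab.1 != ab.2) (y ab.1 - y ab.2).

Definition discr_but (ab : 'I_p * 'I_p) : {mpoly C[nv]} :=
  \prod_(cd | (cd.1 != cd.2) && (cd != ab)) ('X_(vy cd.1) - 'X_(vy cd.2)).

Definition discr_poly : {mpoly C[nv]} :=
  \prod_(cd : 'I_p * 'I_p | cd.1 != cd.2) ('X_(vy cd.1) - 'X_(vy cd.2)).

Definition mpolyC_mx (M : 'M[C]_N) : 'M[{mpoly C[nv]}]_N :=
  map_mx (fun c => c%:MP) M.

Definition pencil_poly : 'M[{mpoly C[nv]}]_N :=
  \sum_i ('X_(vx i) * discr_poly) *: mpolyC_mx (A i)
  + \sum_(ab | ab.1 != ab.2) discr_but ab *: mpolyC_mx (B ab).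

Definition pencil_det : {mpoly C[nv]} :=
  \det (krylov_mx pencil_poly (const_mx 1)).

Lemma discr_neq0 y : injective y -> discr y != 0.
Proof.
move=> y_inj; apply/prodf_neq0 => ab ab_offdiag; rewrite subr_eq0.
by apply: contraNneq ab_offdiag => /y_inj ->.
Qed.

Lemma meval_mpolyC_mx w M : map_mx (meval w) (mpolyC_mx M) = M.
Proof. by apply/matrixP => i j; rewrite !mxE mevalC. Qed.

Lemma meval_pencil_poly x y : injective y ->
  map_mx (meval (pt x y)) pencil_poly = discr y *: pencil x y.
Proof.
move=> y_inj; have meval_prod (P : pred ('I_p * 'I_p)) :
    meval (pt x y) (\prod_(cd | P cd) ('X_(vy cd.1) - 'X_(vy cd.2)))
    = \prod_(cd | P cd) (y cd.1 - y cd.2).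
  by rewrite rmorph_prod; apply: eq_bigr => cd _; rewrite rmorphB /= !mevalXU !pt_vy.
rewrite map_mxD !raddf_sum scalerDr !scaler_sumr /=; congr (_ + _).
  apply: eq_bigr => i _; rewrite map_mxZ meval_mpolyC_mx rmorphM /= mevalXU pt_vx.
  by rewrite meval_prod scalerA mulrC.
apply: eq_bigr => ab ab_offdiag; rewrite map_mxZ meval_mpolyC_mx scalerA.
rewrite /= meval_prod [discr y](bigD1 ab) //= mulrAC mulfV ?mul1r //.
by rewrite subr_eq0; apply: contraNneq ab_offdiag => /y_inj ->.
Qed.

Lemma meval_pencil_det x y : injective y ->
  pencil_det.@[pt x y]
  = \det (krylov_mx (pencil x y) (const_mx 1)) * \prod_(j < N) discr y ^+ j.
Proof.
move=> y_inj; rewrite /pencil_det -det_map_mx map_krylov_mx.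
by rewrite meval_pencil_poly // map_const_mx rmorph1 det_krylov_mxZ.
Qed.

Lemma pencil_eigenspace_le1 x y mu :
  injective y -> pencil_det.@[pt x y] != 0 ->
  exists u : 'rV_N, forall f, f *m pencil x y = mu *: f -> exists c, f = c *: u.
Proof.
move=> y_inj; rewrite meval_pencil_det // mulf_eq0 negb_or => /andP[K_neq0 _].
by apply: (krylov_eigenspace_le1 (v := const_mx 1)); rewrite unitmxE unitfE.
Qed.

Lemma pencil_det_neq0 x0 (w : 'I_p -> C) : injective w ->
  \det (krylov_mx (\sum_i x0 i *: A i) (const_mx 1)) != 0 -> pencil_det != 0.
Proof.
move=> w_inj; set A0 := \sum_i _; move=> A0_cyclic.
pose B0 := \sum_(ab | ab.1 != ab.2) (w ab.1 - w ab.2)^-1 *: B ab.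
pose Q : {poly C} :=
  \det (krylov_mx (map_mx polyC A0 + 'X *: map_mx polyC B0) (const_mx 1)).
have hornerQ s : Q.[s] = \det (krylov_mx (A0 + s *: B0) (const_mx 1)).
  rewrite -horner_evalE -det_map_mx map_krylov_mx map_const_mx rmorph1.
  have evalC M : map_mx (horner_eval s) (map_mx polyC M) = M.
    by apply/matrixP => i j; rewrite !mxE horner_evalE hornerC.
  by rewrite map_mxD map_mxZ /= !evalC horner_evalE hornerX.
have [s] : exists s, ~~ root ('X * Q) s.
  apply/closed_nonrootP; rewrite mulf_neq0 ?polyX_eq0 //.
  apply: contraNneq A0_cyclic => Q0.
  by rewrite -[A0]addr0 -(scale0r B0) -hornerQ Q0 horner0.
rewrite /root hornerM hornerX mulf_eq0 negb_or => /andP[s_neq0 Qs_neq0].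
(* Moving the poles to [w / s] turns the pencil into [A0 + s B0]. *)
pose y a := s^-1 * w a.
have y_inj : injective y by move=> a b /mulfI; rewrite invr_eq0 => /(_ s_neq0)/w_inj.
have pencil_y : pencil x0 y = A0 + s *: B0.
  rewrite /pencil scaler_sumr; congr (_ + _); apply: eq_bigr => ab _.
  by rewrite scalerA /y -mulrBr invfM invrK mulrC.
have : pencil_det.@[pt x0 y] != 0.
  rewrite meval_pencil_det // pencil_y -hornerQ mulf_neq0 //.
  by apply/prodf_neq0 => j _; rewrite expf_neq0 // discr_neq0.
by apply: contraNneq => ->; rewrite meval0.
Qed.

End GenericPencil.

Lemma sum_digits_lt (b M : nat) (r : 'I_M -> nat) :
  (forall a, r a < b)%N -> (\sum_(a < M) b ^ a * r a < b ^ M)%N.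
Proof.
elim: M r => [|M IHM] r r_lt; first by rewrite big_ord0 expn0.
have := IHM (fun a => r (widen_ord (leqnSn M) a)) (fun a => r_lt _).
have := r_lt ord_max; rewrite big_ord_recr /= expnS.
set s := (\sum_(a < M) _)%N; set bM := (b ^ M)%N; nia.
Qed.

Lemma sum_digits_inj (b M : nat) (r r' : 'I_M -> nat) :
  (forall a, r a < b)%N -> (forall a, r' a < b)%N ->
  (\sum_(a < M) b ^ a * r a = \sum_(a < M) b ^ a * r' a)%N -> r =1 r'.
Proof.
elim: M r r' => [|M IHM] r r' r_lt r'_lt; first by move=> _ [].
have := @sum_digits_lt b M (fun a => r' (widen_ord (leqnSn M) a)) (fun a => r'_lt _).
have := @sum_digits_lt b M (fun a => r (widen_ord (leqnSn M) a)) (fun a => r_lt _).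
rewrite !big_ord_recr /=; set s := (\sum_(a < M) _)%N; set s' := (\sum_(a < M) _)%N.
set bM := (b ^ M)%N => s_lt s'_lt eq_sum.
have eq_max : r ord_max = r' ord_max.
  by case: (ltngtP (r ord_max) (r' ord_max)) => // ?; nia.
have eq_s : s = s' by move: eq_sum; rewrite eq_max; lia.
have eq_low := IHM _ _ (fun a => r_lt (widen_ord (leqnSn M) a))
  (fun a => r'_lt (widen_ord (leqnSn M) a)) eq_s.
move=> a; have [lt_aM | ge_aM] := ltnP a M.
  have -> : a = widen_ord (leqnSn M) (Ordinal lt_aM) by apply: val_inj.
  exact: eq_low.
have -> : a = ord_max by apply/val_inj/eqP; rewrite eqn_leq ge_aM -ltnS ltn_ord.
exact: eq_max.
Qed.

Section FermionicMatrices.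
Variables (C : numClosedFieldType) (k n : nat).
Local Notation T := {set 'I_(k * n)}.
Local Notation NN := #|{: T}|.
Local Notation v := (@vidx k n).
Local Notation Pkn := (Pkn C k n).

Definition coords (f : Pkn) : 'rV[C]_NN := \row_j f (enum_val j).
Definition of_coords (u : 'rV[C]_NN) : Pkn := [ffun S => u 0 (enum_rank S)].

Lemma coords_inj : injective coords.
Proof.
move=> f g /rowP eq_fg; apply/ffunP => S.
by have := eq_fg (enum_rank S); rewrite !mxE enum_rankK.
Qed.

Lemma of_coordsK : cancel of_coords coords.
Proof. by move=> u; apply/rowP => j; rewrite !mxE ffunE enum_valK. Qed.

Lemma coords_scalP c f : coords (scalP c f) = c *: coords f.
Proof. by apply/rowP => j; rewrite !mxE ffunE. Qed.

Definition xd_mx (c d : 'I_(k * n)) : 'M[C]_NN :=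
  \matrix_(i, j) xd_mono C c d (enum_val i) (enum_val j).

Lemma coords_XD c d f : coords (XD c d f) = coords f *m xd_mx c d.
Proof.
apply/rowP => j; rewrite !mxE ffunE.
rewrite (eq_bigl [in {: T}]) // big_enum_val /=.
by apply: eq_bigr => i _; rewrite !mxE.
Qed.

Lemma xd_mono_diag c (S S' : T) :
  xd_mono C c c S S' = ((c \in S) && (S' == S))%:R.
Proof.
rewrite /xd_mono; case: ifP => cS /=; last by rewrite ffunE.
rewrite setD11 !ffunE setD1K //.
have -> : [set e in S :\ c | (e < c)%N] = [set e in S | (e < c)%N].
  by apply/setP => e; rewrite !inE; case: eqVneq => [->|]; rewrite ?ltnn ?andbF.
by rewrite addnn -signr_odd odd_double mul1r.
Qed.

Lemma xd_mx_diag c :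
  xd_mx c c = diag_mx (\row_(j < NN) (c \in (enum_val j : T))%:R).
Proof.
apply/matrixP => i j; rewrite !mxE xd_mono_diag (inj_eq enum_val_inj) eq_sym.
by case: eqVneq => [->|]; case: (c \in _).
Qed.

(* [coords] turns [XD c d] into right multiplication by [xd_mx c d], so a
   composite [XD _ _ (XD _ _ f)] becomes a product in the reverse order. *)
Definition Hop_mx (al : 'I_n -> C) (z : 'I_k -> C) (a : 'I_k) : 'M[C]_NN :=
  \sum_(i < n) al i *: xd_mx (v a i) (v a i)
  + \sum_(b < k | b != a) (z a - z b)^-1 *:
      \sum_(i < n) \sum_(j < n) (xd_mx (v b j) (v b i) *m xd_mx (v a i) (v a j)).

Definition Hop'_mx (al : 'I_n -> C) (z : 'I_k -> C) (i : 'I_n) : 'M[C]_NN :=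
  \sum_(a < k) z a *: xd_mx (v a i) (v a i)
  + \sum_(j < n | j != i) (al j - al i)^-1 *:
      \sum_(a < k) \sum_(b < k) (xd_mx (v b j) (v a j) *m xd_mx (v a i) (v b i)).

Lemma coords_Hop al z a f : coords (Hop al z a f) = coords f *m Hop_mx al z a.
Proof.
rewrite mulmxDr !mulmx_sumr; apply/rowP => t; rewrite !mxE ffunE !summxE.
congr (_ + _).
  by apply: eq_bigr => i _; rewrite -scalemxAr -coords_XD !mxE.
apply: eq_bigr => b _; rewrite -scalemxAr !mulmx_sumr !mxE summxE.
congr (_ * _); apply: eq_bigr => i _; rewrite mulmx_sumr summxE.
by apply: eq_bigr => j _; rewrite mulmxA -!coords_XD mxE.
Qed.

Lemma coords_Hop' al z i f : coords (Hop' al z i f) = coords f *m Hop'_mx al z i.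
Proof.
rewrite mulmxDr !mulmx_sumr; apply/rowP => t; rewrite !mxE ffunE !summxE.
congr (_ + _).
  by apply: eq_bigr => a _; rewrite -scalemxAr -coords_XD !mxE.
apply: eq_bigr => j _; rewrite -scalemxAr !mulmx_sumr !mxE summxE.
congr (_ * _); apply: eq_bigr => a _; rewrite mulmx_sumr summxE.
by apply: eq_bigr => b _; rewrite mulmxA -!coords_XD mxE.
Qed.

Definition set_code (S : T) : nat :=
  \sum_(a < k) (2 ^ n) ^ a * \sum_(i < n) 2 ^ i * (v a i \in S).

Lemma set_code_inj : injective set_code.
Proof.
move=> S S' eq_code.
pose row_code (S : T) (a : 'I_k) := (\sum_(i < n) 2 ^ i * (v a i \in S))%N.
have row_code_lt S0 a : (row_code S0 a < 2 ^ n)%N.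
  by apply: sum_digits_lt => i; case: (_ \in _).
have eq_row := sum_digits_inj (row_code_lt S) (row_code_lt S') eq_code.
apply/setP => c; case/mxvec_indexP: c => a i.
have bit_lt (S0 : T) j : ((v a j \in S0) < 2)%N by case: (_ \in _).
have := sum_digits_inj (bit_lt S) (bit_lt S') (eq_row a) i.
by case: (_ \in S); case: (_ \in S').
Qed.

Definition number_mx : 'M[C]_NN :=
  \sum_(a < k) \sum_(i < n) ((2 ^ n) ^ a * 2 ^ i)%:R *: xd_mx (v a i) (v a i).

Lemma number_mx_diag :
  number_mx = diag_mx (\row_(j < NN) (set_code (enum_val j))%:R).
Proof.
apply/matrixP => x y; rewrite /number_mx summxE [RHS]mxE.
under eq_bigr do rewrite summxE.
under eq_bigr do under eq_bigr do rewrite xd_mx_diag !mxE.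
have [-> | _] := eqVneq x y; last first.
  by rewrite mulr0n big1 // => a _; rewrite big1 // => i _; rewrite mulr0n mulr0.
rewrite mxE mulr1n /set_code natr_sum; apply: eq_bigr => a _.
rewrite natrM natr_sum mulr_sumr; apply: eq_bigr => i _.
by rewrite mulr1n !natrM mulrA.
Qed.

Lemma det_krylov_number_mx_neq0 :
  \det (krylov_mx number_mx (const_mx 1)) != 0.
Proof.
rewrite number_mx_diag; apply: det_krylov_diag_neq0 => x y; rewrite !mxE.
by move/eqP; rewrite eqr_nat => /eqP/set_code_inj/enum_val_inj.
Qed.

Lemma common_eig_dim_le1 (I : finType) (ops : I -> Pkn -> Pkn)
    (Hm : I -> 'M[C]_NN) (beta : I -> C) {l m lam} :
  (forall x f, coords (ops x f) = coords f *m Hm x) ->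
  (forall mu, exists u : 'rV_NN, forall g,
     g *m (\sum_x beta x *: Hm x) = mu *: g -> exists c, g = c *: u) ->
  dim_le1 (common_eig ops lam l m).
Proof.
move=> coords_ops simple; have [u u_spans] := simple (\sum_x beta x * lam x).
exists (of_coords u) => f [_ f_eig].
have [|c f_eq] := u_spans (coords f).
  rewrite mulmx_sumr scaler_suml; apply: eq_bigr => x _.
  by rewrite -scalemxAr -coords_ops f_eig coords_scalP scalerA mulrC.
by exists c; apply: coords_inj; rewrite coords_scalP of_coordsK.
Qed.

Definition gaudin_A (i : 'I_n) : 'M[C]_NN :=
  \sum_(a < k) ((2 ^ n) ^ a)%:R *: xd_mx (v a i) (v a i).

Definition gaudin_B (ab : 'I_k * 'I_k) : 'M[C]_NN :=
  ((2 ^ n) ^ ab.1)%:R *: \sum_(i < n) \sum_(j < n)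
    (xd_mx (v ab.2 j) (v ab.2 i) *m xd_mx (v ab.1 i) (v ab.1 j)).

Lemma sum_Hop_mx al z :
  \sum_(a < k) ((2 ^ n) ^ a)%:R *: Hop_mx al z a = pencil gaudin_A gaudin_B al z.
Proof.
rewrite /Hop_mx /pencil; under eq_bigr do rewrite scalerDr.
rewrite big_split /=; congr (_ + _).
  rewrite /gaudin_A; under eq_bigr do rewrite scaler_sumr.
  under [RHS]eq_bigr do rewrite scaler_sumr.
  rewrite exchange_big /=; apply: eq_bigr => i _; apply: eq_bigr => a _.
  by rewrite !scalerA mulrC.
under eq_bigr do rewrite scaler_sumr.
rewrite pair_big_dep /=; apply: eq_big => [ab | ab _]; first by rewrite eq_sym.
by rewrite /gaudin_B !scalerA mulrC.
Qed.

Lemma sum_gaudin_A : \sum_(i < n) (2 ^ i)%:R *: gaudin_A i = number_mx.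
Proof.
rewrite /number_mx exchange_big /=; apply: eq_bigr => i _.
rewrite scaler_sumr; apply: eq_bigr => a _.
by rewrite scalerA natrM mulrC.
Qed.

Definition dual_A (a : 'I_k) : 'M[C]_NN :=
  \sum_(i < n) (2 ^ i)%:R *: xd_mx (v a i) (v a i).

Definition dual_B (ji : 'I_n * 'I_n) : 'M[C]_NN :=
  (2 ^ ji.2)%:R *: \sum_(a < k) \sum_(b < k)
    (xd_mx (v b ji.1) (v a ji.1) *m xd_mx (v a ji.2) (v b ji.2)).

Lemma sum_Hop'_mx al z :
  \sum_(i < n) (2 ^ i)%:R *: Hop'_mx al z i = pencil dual_A dual_B z al.
Proof.
rewrite /Hop'_mx /pencil; under eq_bigr do rewrite scalerDr.
rewrite big_split /=; congr (_ + _).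
  rewrite /dual_A; under eq_bigr do rewrite scaler_sumr.
  under [RHS]eq_bigr do rewrite scaler_sumr.
  rewrite exchange_big /=; apply: eq_bigr => a _; apply: eq_bigr => i _.
  by rewrite !scalerA mulrC.
under eq_bigr do rewrite scaler_sumr.
rewrite pair_big_dep (reindex (fun ij : 'I_n * 'I_n => (ij.2, ij.1))) /=.
  by apply: eq_bigr => ij _; rewrite /dual_B !scalerA mulrC.
by exists (fun ij : 'I_n * 'I_n => (ij.2, ij.1)) => [[]|[]].
Qed.

Lemma sum_dual_A : \sum_(a < k) ((2 ^ n) ^ a)%:R *: dual_A a = number_mx.
Proof.
apply: eq_bigr => a _; rewrite scaler_sumr; apply: eq_bigr => i _.
by rewrite scalerA natrM.
Qed.

End FermionicMatrices.

Arguments gaudin_A {C k n} i.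
Arguments gaudin_B {C k n} ab.
Arguments dual_A {C k n} a.
Arguments dual_B {C k n} ji.

Lemma pt_lshift (C : numClosedFieldType) k n (al : 'I_n -> C) (z : 'I_k -> C) i :
  pt al z (lshift k i) = al i.
Proof. by rewrite /pt (unsplitK (inl _ i) : split (lshift k i) = inl i). Qed.

Lemma pt_rshift (C : numClosedFieldType) k n (al : 'I_n -> C) (z : 'I_k -> C) a :
  pt al z (rshift n a) = z a.
Proof. by rewrite /pt (unsplitK (inr _ a) : split (rshift n a) = inr a). Qed.

Lemma ord_natr_inj (C : numFieldType) M : injective (fun a : 'I_M => (a : nat)%:R : C).
Proof. by move=> a b /eqP; rewrite eqr_nat => /eqP/val_inj. Qed.

Theorem lemma5p6 (C : numClosedFieldType) (k n : nat)
    (l : 'I_k -> nat) (m : 'I_n -> nat) :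
  inZ l m ->
  (exists P : {mpoly C[n + k]}, P != 0 /\
     forall (al : 'I_n -> C) (z : 'I_k -> C),
       injective al -> injective z -> P.@[pt al z] != 0 ->
       forall lam : 'I_k -> C,
         dim_le1 (common_eig (Hop al z) lam l m))
  /\
  (exists P : {mpoly C[n + k]}, P != 0 /\
     forall (al : 'I_n -> C) (z : 'I_k -> C),
       injective al -> injective z -> P.@[pt al z] != 0 ->
       forall lam : 'I_n -> C,
         dim_le1 (common_eig (Hop' al z) lam l m)).
Proof.
move=> _; have pt_l := @pt_lshift C k n; have pt_r := @pt_rshift C k n.
split.
- exists (pencil_det gaudin_A gaudin_B (lshift k) (@rshift n k)); split.
    apply: (pencil_det_neq0 (x0 := fun i => (2 ^ i)%:R) _ pt_l pt_r
      (@ord_natr_inj C k)).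
    by rewrite sum_gaudin_A det_krylov_number_mx_neq0.
  move=> al z _ z_inj P_neq0 lam.
  apply: (common_eig_dim_le1 (beta := fun a : 'I_k => ((2 ^ n) ^ a)%:R)
    (coords_Hop al z)) => mu.
  by rewrite sum_Hop_mx; apply: (pencil_eigenspace_le1 pt_l pt_r) z_inj P_neq0.
(* For [Hop'] the diagonal coefficients are [z] and the poles are [al]. *)
pose pt' (x : 'I_k -> C) (y : 'I_n -> C) := pt y x.
have pt'_r x y a : pt' x y (rshift n a) = x a by apply: pt_r.
have pt'_l x y i : pt' x y (lshift k i) = y i by apply: pt_l.
exists (pencil_det dual_A dual_B (@rshift n k) (lshift k)); split.
  apply: (pencil_det_neq0 (x0 := fun a : 'I_k => ((2 ^ n) ^ a)%:R) _ pt'_r pt'_l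
    (@ord_natr_inj C n)).
  by rewrite sum_dual_A det_krylov_number_mx_neq0.
move=> al z al_inj _ P_neq0 lam.
apply: (common_eig_dim_le1 (beta := fun i : 'I_n => (2 ^ i)%:R)
  (coords_Hop' al z)) => mu.
by rewrite sum_Hop'_mx; apply: (pencil_eigenspace_le1 pt'_r pt'_l) al_inj P_neq0.
Qed.
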